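(* There exists a Heffter array $H(n;k)$ for all $n\equiv 2\pmod 4$ with $n\ge 6$ and all $k\equiv 1\pmod 4$ with $5\le k<n$.
   Context: A Heffter array $H(n;k)$ is an $n\times n$ array in which some cells are filled with nonzero integers and the others are empty, such that: each row and each column contains exactly $k$ filled cells; the entries of every row and of every column sum to $0$ modulo $2nk+1$; and for each integer $1\le x\le nk$, exactly one of $x$ or $-x$ appears in the array, and it appears exactly once. *)

From mathcomp Require Import all_boot all_order all_algebra.
Set Implicit Arguments. Unset Strict Implicit. Unset Printing Implicit Defensive.
Import Order.TTheory GRing.Theory Num.Theory.
Local Open Scope ring_scope.

(* A partially filled n x n array: [None] = empty cell, [Some a] = cell filled
   with the integer a. *)
Definition parray (n : nat) := 'I_n -> 'I_n -> option int.

Definition cell_val (c : option int) : int := if c is Some a then a else 0.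

Definition filled (c : option int) : bool := c != None.

Definition is_heffter (n k : nat) (A : parray n) : Prop :=
  let m : int := (2 * n * k + 1)%N%:Z in
  (forall i j a, A i j = Some a -> a != 0) /\
  (forall i : 'I_n, #|[set j : 'I_n | filled (A i j)]| = k) /\
  (forall j : 'I_n, #|[set i : 'I_n | filled (A i j)]| = k) /\
  (forall i : 'I_n, ((\sum_(j : 'I_n) cell_val (A i j)) %% m)%Z = 0) /\
  (forall j : 'I_n, ((\sum_(i : 'I_n) cell_val (A i j)) %% m)%Z = 0) /\
  (forall x : nat, (1 <= x <= n * k)%N ->
     #|[set ij : 'I_n * 'I_n |
         (A ij.1 ij.2 == Some (x%:Z)) || (A ij.1 ij.2 == Some (- x%:Z))]| = 1%N).

From mathcomp Require Import all_boot all_order all_algebra.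
From mathcomp Require Import zify ring.

(* Write n = 2h with h odd and k = 4t + 1, so that 2t + 1 <= h.  A cell (i, j) is filled
   when its cyclic diagonal j - i lies in {0, ..., 2t} ∪ {h, ..., h + 2t - 2} ∪ {n - 1}, and
   its entry depends only on the diagonal, on the parity of i and on i mod h (which together
   determine i, since h is odd).  Apart from the five base diagonals 0, 1, 2, h, n - 1, the
   filled diagonals come in t - 1 blocks {3 + 2b, 4 + 2b, h + 1 + 2b, h + 2 + 2b} whose four
   entries cancel exactly in every row and every column.  On the base diagonals the entries
   are the halves W / 2 modulo 2nk + 1 of small integers W whose signed sums vanish along
   every row and column, so the base entries of a line also sum to 0 modulo 2nk + 1.
   Finally, the absolute value of an entry is an injective encoding of (diagonal, parity of
   the row, row mod h) into [1, nk]; as there are exactly nk filled cells, every magnitude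
   occurs exactly once. *)

Set Implicit Arguments. Unset Strict Implicit. Unset Printing Implicit Defensive.
Import Order.TTheory GRing.Theory Num.Theory.

Lemma big_nat_pairs (V : nmodType) (F : nat -> V) (a c : nat) :
  (\sum_(a <= d < a + 2 * c) F d = \sum_(b < c) (F (a + 2 * b)%N + F (a + 2 * b).+1))%R.
Proof.
elim: c => [|c IHc]; first by rewrite muln0 addn0 big_geq // big_ord0.
rewrite big_ord_recr /= -IHc (_ : a + 2 * c.+1 = (a + 2 * c).+2); last by lia.
by rewrite !big_nat_recr /= ?addrA //; lia.
Qed.

Definition signz (neg : bool) (z : int) : int := if neg then (- z)%R else z.
Arguments signz : simpl never.

Section HalvesModOdd.
Variable m : nat.
Hypothesis m_odd : odd m.

(* The representative of [W / 2] modulo [m] in [(- m / 2, m / 2]], for [W <= m]. *)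
Definition halfm (W : nat) : int := if odd W then (- Posz (m - W)./2)%R else Posz W./2.

Lemma halfmE (W : nat) : W <= m -> (halfm W * 2 = Posz W - Posz (odd W) * Posz m)%R.
Proof. by rewrite /halfm; case: (boolP (odd W)) => /= odd_W; lia. Qed.

Lemma dvdz_sum_halfm (s : seq (bool * nat)) :
  all (fun p => p.2 <= m) s -> (\sum_(p <- s) signz p.1 (Posz p.2) = 0)%R ->
  (Posz m %| (\sum_(p <- s) signz p.1 (halfm p.2))%R)%Z.
Proof.
move=> /allP s_le_m sum0.
rewrite -(@Gauss_dvdzl _ _ 2); last by rewrite coprimezE /= coprimen2 m_odd.
have -> : ((\sum_(p <- s) signz p.1 (halfm p.2)) * 2 =
           \sum_(p <- s) signz p.1 (Posz p.2)
           - (\sum_(p <- s) signz p.1 (Posz (odd p.2))) * Posz m)%R.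
  rewrite mulr_suml big_seq [X in (_ = X - _)%R]big_seq [X in (_ = _ - X * _)%R]big_seq.
  rewrite mulr_suml -sumrB; apply: eq_bigr => p /s_le_m le_pm.
  by case: p.1; rewrite /signz ?mulNr halfmE //; ring.
by rewrite sum0 sub0r rpredN dvdz_mull.
Qed.

Lemma dvdz_halfm5 (n1 n2 n3 n4 n5 : bool) (W1 W2 W3 W4 W5 : nat) :
  W1 <= m -> W2 <= m -> W3 <= m -> W4 <= m -> W5 <= m ->
  (signz n1 W1 + signz n2 W2 + signz n3 W3 + signz n4 W4 + signz n5 W5 = 0)%R ->
  (Posz m %| (signz n1 (halfm W1) + signz n2 (halfm W2) + signz n3 (halfm W3)
               + signz n4 (halfm W4) + signz n5 (halfm W5))%R)%Z.
Proof.
move=> le1 le2 le3 le4 le5 sum0.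
have := dvdz_sum_halfm (s := [:: (n1, W1); (n2, W2); (n3, W3); (n4, W4); (n5, W5)]).
rewrite !big_cons !big_nil /= !addr0 !addrA le1 le2 le3 le4 le5; exact.
Qed.

End HalvesModOdd.

Definition diag {n : nat} (n_gt0 : 0 < n) (i j : 'I_n) : 'I_n :=
  Ordinal (ltn_pmod (j + n - i) n_gt0).

Lemma diag_injr {n : nat} (n_gt0 : 0 < n) (i : 'I_n) : injective (diag n_gt0 i).
Proof.
move=> j1 j2 /(congr1 val) /= /eqP; have lt_i_n := ltn_ord i.
have [-> ->] : j1 + n - i = j1 + (n - i) /\ j2 + n - i = j2 + (n - i) by lia.
by rewrite eqn_modDr !modn_small // => /eqP /val_inj.
Qed.

Lemma diagK {n : nat} (n_gt0 : 0 < n) (j : 'I_n) : involutive (diag n_gt0 ^~ j).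
Proof.
move=> i; apply: val_inj => /=; set u := (j + n - i) %% n.
have [lt_i_n lt_j_n] := (ltn_ord i, ltn_ord j); have lt_u_n : u < n by rewrite ltn_pmod.
have : (j + n - u + u) %% n == (i + u) %% n.
  rewrite (_ : j + n - u + u = j + n); last by lia.
  by rewrite /u modnDmr; apply/eqP; congr (_ %% _); lia.
by rewrite eqn_modDr => /eqP ->; rewrite modn_small.
Qed.

Lemma diag_injl {n : nat} (n_gt0 : 0 < n) (j : 'I_n) : injective (diag n_gt0 ^~ j).
Proof. exact: inv_inj (@diagK _ n_gt0 j). Qed.

Lemma divmod_inj {d q1 r1 q2 r2 : nat} : r1 < d -> r2 < d ->
  q1 * d + r1 = q2 * d + r2 -> q1 = q2 /\ r1 = r2.
Proof.
by move=> lt_r1 lt_r2 eq_qr; have := edivn_eq q1 lt_r1; rewrite eq_qr edivn_eq // => -[].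
Qed.

Lemma odd_modn_inj (h a b : nat) : odd h -> a < 2 * h -> b < 2 * h ->
  odd a = odd b -> a %% h = b %% h -> a = b.
Proof.
move=> odd_h lt_a lt_b odd_ab mod_ab.
have : a == b %[mod 2 * h] by rewrite chinese_remainder ?coprime2n // !modn2 odd_ab mod_ab !eqxx.
by rewrite !modn_small // => /eqP.
Qed.

Lemma card_fiber_inj (T : finType) (F : {set T}) (f : T -> nat) (x : nat) :
  {in F &, injective f} -> (forall a, a \in F -> 0 < f a <= #|F|) -> 0 < x <= #|F| ->
  #|[set a in F | f a == x]| = 1.
Proof.
move=> f_inj f_range x_range; set s := [seq f a | a <- enum F].
have s_uniq : uniq s.
  by rewrite map_inj_in_uniq ?enum_uniq // => a b; rewrite !mem_enum; exact: f_inj.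
have s_sub : {subset s <= iota 1 #|F|}.
  by move=> y /mapP[a]; rewrite mem_enum mem_iota => /f_range ? ->; lia.
have size_s : size (iota 1 #|F|) <= size s by rewrite size_iota size_map cardE.
have [_ s_iota] := uniq_min_size s_uniq s_sub size_s.
have /mapP[a Fa fa] : x \in s by rewrite s_iota mem_iota; lia.
rewrite mem_enum in Fa; rewrite -(cards1 a); apply: eq_card => b; rewrite !inE.
apply/andP/eqP => [[Fb /eqP fb] | ->]; last by rewrite Fa -fa.
by apply: f_inj; rewrite // fb.
Qed.

Inductive diag_kind :=
  | Dg0 | Dg1 | Dg2 | DgH | DgLast
  | Lo0 of nat | Lo1 of nat | Up0 of nat | Up1 of nat.

Section Construction.
Variables h t : nat.
Hypotheses (h_odd : odd h) (t_gt0 : 0 < t) (t_small : 2 * t + 1 <= h).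

Local Notation n := (2 * h).
Local Notation N := (n * (4 * t + 1)).
Local Notation m := (2 * n * (4 * t + 1) + 1).

Lemma h_gt0 : 0 < h. Proof. lia. Qed.

Lemma n_gt0 : 0 < n. Proof. lia. Qed.

Definition in_supp (d : nat) : bool :=
  [|| d < 2 * t + 1, h <= d < h + 2 * t - 1 | d == n - 1].

Definition num_of (k : diag_kind) : nat :=
  match k with
  | Dg0 => 0 | Dg1 => 1 | Dg2 => 2 | DgH => h | DgLast => n - 1
  | Lo0 b => 3 + 2 * b | Lo1 b => 4 + 2 * b | Up0 b => h + 1 + 2 * b | Up1 b => h + 2 + 2 * b
  end.

Definition valid_kind (k : diag_kind) : bool :=
  match k with Lo0 b | Lo1 b | Up0 b | Up1 b => b < t - 1 | _ => true end.

Definition kind_of (d : nat) : diag_kind :=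
  if d == 0 then Dg0 else if d == 1 then Dg1 else if d == 2 then Dg2
  else if d == h then DgH else if d == n - 1 then DgLast
  else if d < 2 * t + 1 then (if odd d then Lo0 ((d - 3) %/ 2) else Lo1 ((d - 4) %/ 2))
  else if odd (d - h) then Up0 ((d - h - 1) %/ 2) else Up1 ((d - h - 2) %/ 2).

Lemma num_ofK (k : diag_kind) : valid_kind k -> kind_of (num_of k) = k.
Proof.
rewrite /kind_of; case: k => [|||||b|b|b|b] /= valid_b;
  repeat first [rewrite ifT; last by lia | rewrite ifF; last by apply/negbTE; lia];
  by [| congr (_ _); lia].
Qed.

Lemma kind_of_base :
  [/\ kind_of 0 = Dg0, kind_of 1 = Dg1, kind_of 2 = Dg2, kind_of h = DgH
     & kind_of (n - 1) = DgLast].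
Proof. by split; [| | | exact: (@num_ofK DgH) | exact: (@num_ofK DgLast)]. Qed.

Lemma kind_of_block (b : nat) : b < t - 1 ->
  [/\ kind_of (3 + 2 * b) = Lo0 b, kind_of (4 + 2 * b) = Lo1 b,
      kind_of (h + 1 + 2 * b) = Up0 b & kind_of (h + 2 + 2 * b) = Up1 b].
Proof.
by move=> lt_b; split; [exact: (@num_ofK (Lo0 b)) | exact: (@num_ofK (Lo1 b))
                       | exact: (@num_ofK (Up0 b)) | exact: (@num_ofK (Up1 b))].
Qed.

Lemma supp_num (d : nat) : in_supp d -> exists2 k, valid_kind k & d = num_of k.
Proof.
rewrite /in_supp => supp_d.
have [lt_d3 | le3d] := ltnP d 3.
  by case: d {supp_d} lt_d3 => [|[|[|]]] // _; [exists Dg0 | exists Dg1 | exists Dg2].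
have [lt_dlo | le_lo_d] := ltnP d (2 * t + 1).
  by exists (if odd d then Lo0 ((d - 3) %/ 2) else Lo1 ((d - 4) %/ 2)); case: ifP => /=; lia.
have [-> | ne_dh] := eqVneq d h; first by exists DgH.
have [-> | ne_dl] := eqVneq d (n - 1); first by exists DgLast.
exists (if odd (d - h) then Up0 ((d - h - 1) %/ 2) else Up1 ((d - h - 2) %/ 2));
  case: ifP => /=; lia.
Qed.

Lemma kind_ofK (d : nat) : in_supp d -> valid_kind (kind_of d) /\ num_of (kind_of d) = d.
Proof. by case/supp_num => k valid_k ->; rewrite num_ofK. Qed.

Lemma sum_supp (V : nmodType) (F : nat -> V) :
  (\sum_(d < n) (if in_supp d then F d else 0) =
   F 0%N + F 1%N + F 2%N + F h + F (n - 1)%N +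
   \sum_(b < t - 1)
     (F (3 + 2 * b)%N + F (4 + 2 * b)%N + F (h + 1 + 2 * b)%N + F (h + 2 + 2 * b)%N))%R.
Proof.
pose G d := (if in_supp d then F d else 0)%R.
have sum0 (a c : nat) : (forall d, a <= d < c -> ~~ in_supp d) -> (\sum_(a <= d < c) G d = 0)%R.
  by move=> out; rewrite big1_seq // => d; rewrite mem_index_iota /G => /out/negbTE ->.
have sum_pairs (a : nat) : (forall d, a <= d < a + 2 * (t - 1) -> in_supp d) ->
    (\sum_(a <= d < a + 2 * (t - 1)) G d = \sum_(b < t - 1) (F (a + 2 * b)%N + F (a + 2 * b).+1))%R.
  move=> in_s; rewrite big_nat_pairs; apply: eq_bigr => -[b lt_b] _ /=.
  by rewrite /G !in_s //; lia.
rewrite -(big_mkord xpredT G).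
rewrite (big_cat_nat _ (n := 3)) //=; try lia.
rewrite (big_cat_nat _ (m := 3) (n := 3 + 2 * (t - 1))) //=; try lia.
rewrite (big_cat_nat _ (m := 3 + 2 * (t - 1)) (n := h)) //=; try lia.
rewrite (big_cat_nat _ (m := h) (n := h + 1)) //=; try lia.
rewrite (big_cat_nat _ (m := h + 1) (n := h + 1 + 2 * (t - 1))) //=; try lia.
rewrite (big_cat_nat _ (m := h + 1 + 2 * (t - 1)) (n := n - 1)) //=; try lia.
rewrite !sum_pairs ?(sum0 (3 + 2 * (t - 1)) h) ?(sum0 (h + 1 + 2 * (t - 1)) (n - 1)); first last.
- move=> d; rewrite /in_supp; lia.
- move=> d; rewrite /in_supp; lia.
- move=> d; rewrite /in_supp; lia.
- move=> d; rewrite /in_supp; lia.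
rewrite addn1 big_nat1 (big_ltn (n := n)); last by lia.
rewrite (big_geq (m := (n - 1).+1)); last by lia.
rewrite (big_ltn (m := 0)) // (big_ltn (m := 1)) // (big_ltn (m := 2)) // (big_geq (m := 3)) // /G.
do 5 (rewrite ifT; last by rewrite /in_supp; lia).
rewrite [in RHS](eq_bigr (fun b : 'I_(t - 1) => F (3 + 2 * b)%N + F (4 + 2 * b)%N +
                   (F (h.+1 + 2 * b)%N + F (h.+1 + 2 * b)%N.+1))%R); last first.
  by move=> b _; rewrite addrA (_ : (h.+1 + 2 * b).+1 = (h + 2 + 2 * b)%N) //; lia.
rewrite [in RHS]big_split /= !add0r !addr0 -!addrA; do 3 f_equal.
by rewrite addrCA; f_equal; rewrite addrA addrC.
Qed.

Definition cshift (c x : nat) : nat := (x + c) %% h.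

Lemma cshift_lt (c x : nat) : cshift c x < h.
Proof. by rewrite ltn_pmod // h_gt0. Qed.

Lemma cshift_mod (c a C q : nat) : a + c = q * h + C -> cshift c (a %% h) = C %% h.
Proof. by move=> eq_ac; rewrite /cshift modnDml eq_ac modnMDl. Qed.

Definition shalf (neg : bool) (W : nat) : int := signz neg (halfm m W).

(* Block [b] takes its magnitudes from [(blk b, blk b + 8 h]]. *)
Definition blk (b : nat) : nat := 6 * h + 8 * h * b.

Definition ent (k : diag_kind) (e : bool) (x : nat) : int :=
  match k with
  | Dg0 => shalf true (if e then 4 * h - x else 3 * h - x)
  | Dg1 => if e then shalf false (5 * h - cshift (h - 1) x) else shalf true (cshift (h - 1) x + 1)
  | Dg2 => shalf true (if e then 7 * h - x else 8 * h - x)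
  | DgH => shalf false (if e then 12 * h - 2 * x else 10 * h - 2 * x)
  | DgLast => if e then shalf true (6 * h - cshift (h - 1) x)
              else shalf false (cshift (h - 1) x + h + 1)
  | Lo0 b => if e then (- Posz (blk b + 4 * h + 1 + cshift (3 + 2 * b + h - 1) x))%R
             else Posz (blk b + 4 * h - cshift (3 + 2 * b) x)
  | Lo1 b => if e then Posz (blk b + 6 * h + 1 + cshift (4 + 2 * b) x)
             else (- Posz (blk b + 2 * h - cshift (3 + 2 * b) x))%R
  | Up0 b => if e then (- Posz (blk b + 8 * h - cshift (3 + 2 * b + h - 1) x))%R
             else Posz (blk b + 1 + cshift (3 + 2 * b) x)
  | Up1 b => if e then Posz (blk b + 6 * h - cshift (4 + 2 * b) x)
             else (- Posz (blk b + 2 * h + 1 + cshift (3 + 2 * b) x))%R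
  end.

Lemma m_odd : odd m. Proof. by rewrite addn1 /= !oddM. Qed.

Lemma block_row_sum (b : nat) (e : bool) (x : nat) :
  (ent (Lo0 b) e x + ent (Lo1 b) e x + ent (Up0 b) e x + ent (Up1 b) e x = 0)%R.
Proof.
have := cshift_lt (3 + 2 * b) x; have := cshift_lt (3 + 2 * b + h - 1) x.
have := cshift_lt (4 + 2 * b) x; rewrite /= /blk; case: e; lia.
Qed.

Lemma base_row_sum (e : bool) (x : nat) : x < h ->
  (Posz m %| (ent Dg0 e x + ent Dg1 e x + ent Dg2 e x + ent DgH e x + ent DgLast e x)%R)%Z.
Proof.
move=> lt_x_h; have lt_r := cshift_lt (h - 1) x; have le_12h_m : 12 * h <= m by nia.
by case: e; rewrite /= /shalf; apply: (dvdz_halfm5 m_odd); rewrite /signz; lia.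
Qed.

Lemma row_sum (e : bool) (x : nat) : x < h ->
  (Posz m %| (\sum_(d < n) (if in_supp d then ent (kind_of d) e x else 0))%R)%Z.
Proof.
move=> lt_x_h; rewrite (sum_supp (fun d => ent (kind_of d) e x)).
have [-> -> -> -> ->] := kind_of_base.
rewrite big1 ?addr0 => [|[b lt_b] _]; first exact: base_row_sum.
by have [-> -> -> ->] := kind_of_block lt_b; exact: block_row_sum.
Qed.

Lemma block_col_sum (b j : nat) : b < t - 1 -> j < n ->
  (ent (Lo0 b) (odd j (+) true) ((j + n - (3 + 2 * b)) %% h)
   + ent (Lo1 b) (odd j (+) false) ((j + n - (4 + 2 * b)) %% h)
   + ent (Up0 b) (odd j (+) false) ((j + n - (h + 1 + 2 * b)) %% h)
   + ent (Up1 b) (odd j (+) true) ((j + n - (h + 2 + 2 * b)) %% h) = 0)%R.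
Proof.
move=> lt_b lt_j.
have E1 : cshift (3 + 2 * b) ((j + n - (3 + 2 * b)) %% h) = j %% h.
  by apply: (cshift_mod (q := 2)); clear -lt_j lt_b t_small t_gt0; lia.
have E2 : cshift (3 + 2 * b + h - 1) ((j + n - (3 + 2 * b)) %% h) = (j + h - 1) %% h.
  by apply: (cshift_mod (q := 2)); clear -lt_j lt_b t_small t_gt0; lia.
have E3 : cshift (3 + 2 * b) ((j + n - (4 + 2 * b)) %% h) = (j + h - 1) %% h.
  by apply: (cshift_mod (q := 1)); clear -lt_j lt_b t_small t_gt0; lia.
have E4 : cshift (4 + 2 * b) ((j + n - (4 + 2 * b)) %% h) = j %% h.
  by apply: (cshift_mod (q := 2)); clear -lt_j lt_b t_small t_gt0; lia.
have E5 : cshift (3 + 2 * b) ((j + n - (h + 1 + 2 * b)) %% h) = (j + 2) %% h.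
  by apply: (cshift_mod (q := 1)); clear -lt_j lt_b t_small t_gt0; lia.
have E6 : cshift (3 + 2 * b + h - 1) ((j + n - (h + 1 + 2 * b)) %% h) = (j + 1) %% h.
  by apply: (cshift_mod (q := 2)); clear -lt_j lt_b t_small t_gt0; lia.
have E7 : cshift (3 + 2 * b) ((j + n - (h + 2 + 2 * b)) %% h) = (j + 1) %% h.
  by apply: (cshift_mod (q := 1)); clear -lt_j lt_b t_small t_gt0; lia.
have E8 : cshift (4 + 2 * b) ((j + n - (h + 2 + 2 * b)) %% h) = (j + 2) %% h.
  by apply: (cshift_mod (q := 1)); clear -lt_j lt_b t_small t_gt0; lia.
rewrite /= E1 E2 E3 E4 E5 E6 E7 E8 {E1 E2 E3 E4 E5 E6 E7 E8}.
have := ltn_pmod j h_gt0; have := ltn_pmod (j + 1) h_gt0.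
have := ltn_pmod (j + 2) h_gt0; have := ltn_pmod (j + h - 1) h_gt0.
move: (j %% h) ((j + 1) %% h) ((j + 2) %% h) ((j + h - 1) %% h) (blk b) => y0 y1 y2 y3 B.
by case: (odd j) => /=; lia.
Qed.

Lemma base_col_sum (j : nat) : j < n ->
  (Posz m %| (ent Dg0 (odd j) ((j + n - 0) %% h) + ent Dg1 (odd j (+) true) ((j + n - 1) %% h)
     + ent Dg2 (odd j) ((j + n - 2) %% h) + ent DgH (odd j (+) true) ((j + n - h) %% h)
     + ent DgLast (odd j (+) true) ((j + n - (n - 1)) %% h))%R)%Z.
Proof.
move=> lt_j.
have E1 : cshift (h - 1) ((j + n - (n - 1)) %% h) = j %% h.
  by apply: (cshift_mod (q := 1)); clear -lt_j t_small t_gt0; lia.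
have E2 : (j + n - 0) %% h = j %% h by rewrite subn0 addnC modnMDl.
have E3 : cshift (h - 1) ((j + n - 1) %% h) = (j + h - 2) %% h.
  by apply: (cshift_mod (q := 2)); clear -lt_j t_small t_gt0; lia.
have E4 : (j + n - 2) %% h = (j + h - 2) %% h.
  by rewrite (_ : j + n - 2 = h + (j + h - 2)) ?modnDl //; clear -lt_j t_small t_gt0; lia.
have E5 : (j + n - h) %% h = j %% h.
  by rewrite (_ : j + n - h = j + h) ?modnDr //; clear -lt_j t_small t_gt0; lia.
have le_12h_m : 12 * h <= m by clear -t_small t_gt0; nia.
rewrite /= /shalf E1 E2 E3 E4 E5 {E1 E2 E3 E4 E5}.
have := ltn_pmod j h_gt0; have := ltn_pmod (j + h - 2) h_gt0.
move: (j %% h) ((j + h - 2) %% h) => y0 y2 lt_y2 lt_y0.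
by case: (odd j); apply: (dvdz_halfm5 m_odd); rewrite /signz; lia.
Qed.

Lemma col_sum (j : nat) : j < n ->
  (Posz m %| (\sum_(d < n) (if in_supp d
     then ent (kind_of d) (odd ((j + n - d) %% n)) ((j + n - d) %% n %% h) else 0))%R)%Z.
Proof.
move=> lt_j.
rewrite (sum_supp (fun d => ent (kind_of d) (odd ((j + n - d) %% n)) ((j + n - d) %% n %% h))).
have odd_row d : d <= n -> odd ((j + n - d) %% n) = odd j (+) odd d.
  move=> le_dn; rewrite odd_mod ?oddM // oddB; last by lia.
  by rewrite oddD oddM /= addbF.
have mod_row d : (j + n - d) %% n %% h = (j + n - d) %% h by rewrite modn_dvdm // dvdn_mull.
have [le1 le2 leh len] : [/\ 1 <= n, 2 <= n, h <= n & n - 1 <= n] by split; lia.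
rewrite !mod_row (odd_row 0) // (odd_row 1) // (odd_row 2) // (odd_row h) // (odd_row (n - 1)) //.
have [-> -> -> -> ->] := kind_of_base.
rewrite h_odd (_ : odd (n - 1)) /= ?addbF; last by lia.
rewrite big1 ?addr0 => [|[b lt_b] _]; first exact: base_col_sum.
have [-> -> -> ->] := kind_of_block lt_b.
have [le3 le4 le5 le6] :
  [/\ 3 + 2 * b <= n, 4 + 2 * b <= n, h + 1 + 2 * b <= n & h + 2 + 2 * b <= n] by split; lia.
rewrite (odd_row (3 + 2 * b)) // (odd_row (4 + 2 * b)) // (odd_row (h + 1 + 2 * b)) //.
rewrite (odd_row (h + 2 + 2 * b)) // !mod_row.
have [-> -> -> ->] : [/\ odd (3 + 2 * b), odd (4 + 2 * b) = false,
                        odd (h + 1 + 2 * b) = false & odd (h + 2 + 2 * b)] by split; lia.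
exact: block_col_sum.
Qed.

Lemma le_h_ht : h <= h * t. Proof. by rewrite leq_pmulr. Qed.

(* Magnitudes are indexed by a slot [s < 8 t + 2] and a position [p < h]: slots below 10 hold
   the halves of the values [base_W s p] used on the base diagonals, and block [b] occupies
   the eight slots [10 + 8 b + l]. *)
Definition base_W (s p : nat) : nat :=
  if s < 8 then 1 + s * h + p else 2 + (8 + 2 * (s - 8)) * h + 2 * p.

Definition enc (s p : nat) : nat :=
  if s < 10 then `|halfm m (base_W s p)|%N else 6 * h + 1 + (s - 10) * h + p.

Lemma abs_halfm_range {W : nat} : 0 < W <= 12 * h -> (odd W -> W <= 8 * h) ->
  if odd W then N - 4 * h < `|halfm m W|%N <= N else 0 < `|halfm m W|%N <= 6 * h.
Proof.
have := le_h_ht.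
by rewrite /halfm; case: (boolP (odd W)) => /= odd_W; rewrite ?abszN /=; lia.
Qed.

Lemma abs_halfm_inj {W1 W2 : nat} :
  0 < W1 <= 12 * h -> (odd W1 -> W1 <= 8 * h) -> 0 < W2 <= 12 * h -> (odd W2 -> W2 <= 8 * h) ->
  `|halfm m W1|%N = `|halfm m W2|%N -> W1 = W2.
Proof.
move=> W1_range W1_odd W2_range W2_odd; have le_ht := le_h_ht.
have := abs_halfm_range W1_range W1_odd; have := abs_halfm_range W2_range W2_odd.
rewrite /halfm; case: (boolP (odd W1)); case: (boolP (odd W2)) => /=; rewrite ?abszN /=; lia.
Qed.

Lemma base_W_range {s p : nat} : s < 10 -> p < h ->
  0 < base_W s p <= 12 * h /\ (odd (base_W s p) -> base_W s p <= 8 * h).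
Proof.
move=> lt_s lt_p; rewrite /base_W.
by do 10 (case: s lt_s => [|s] lt_s //=; first by split; lia).
Qed.

Lemma base_W_inj (s1 p1 s2 p2 : nat) : s1 < 10 -> s2 < 10 -> p1 < h -> p2 < h ->
  base_W s1 p1 = base_W s2 p2 -> s1 = s2 /\ p1 = p2.
Proof.
move=> lt_s1 lt_s2 lt_p1 lt_p2; rewrite /base_W.
case: ifP => lt1; case: ifP => lt2 eq_W; [ | nia | nia | ].
  by apply: (divmod_inj lt_p1 lt_p2); lia.
have [] : s1 - 4 = s2 - 4 /\ p1 = p2 by apply: (divmod_inj lt_p1 lt_p2); nia.
by split; first lia.
Qed.

Lemma enc_block_range {s p : nat} : 10 <= s < 8 * t + 2 -> p < h -> 6 * h < enc s p <= N - 4 * h.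
Proof. by move=> /andP[le10s lt_s] lt_p; rewrite /enc ifF; nia. Qed.

Lemma enc_range (s p : nat) : s < 8 * t + 2 -> p < h -> 0 < enc s p <= N.
Proof.
move=> lt_s lt_p; have le_ht := le_h_ht; have [lt_s10 | le10s] := ltnP s 10; last first.
  by have := @enc_block_range s p; rewrite le10s lt_s => /(_ isT lt_p); lia.
have [W_range W_odd] := base_W_range lt_s10 lt_p.
by have := abs_halfm_range W_range W_odd; rewrite /enc lt_s10; case: ifP; lia.
Qed.

Lemma enc_inj (s1 p1 s2 p2 : nat) : s1 < 8 * t + 2 -> s2 < 8 * t + 2 -> p1 < h -> p2 < h ->
  enc s1 p1 = enc s2 p2 -> s1 = s2 /\ p1 = p2.
Proof.
move=> lt_s1 lt_s2 lt_p1 lt_p2; have le_ht := le_h_ht.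
have [lt1 | le1] := ltnP s1 10; have [lt2 | le2] := ltnP s2 10.
- have [W1_range W1_odd] := base_W_range lt1 lt_p1.
  have [W2_range W2_odd] := base_W_range lt2 lt_p2.
  rewrite /enc lt1 lt2 => /(abs_halfm_inj W1_range W1_odd W2_range W2_odd).
  exact: base_W_inj.
- have := @enc_block_range s2 p2; rewrite le2 lt_s2 => /(_ isT lt_p2).
  have [W_range W_odd] := base_W_range lt1 lt_p1.
  by have := abs_halfm_range W_range W_odd; rewrite /enc lt1; case: ifP; lia.
- have := @enc_block_range s1 p1; rewrite le1 lt_s1 => /(_ isT lt_p1).
  have [W_range W_odd] := base_W_range lt2 lt_p2.
  by have := abs_halfm_range W_range W_odd; rewrite /enc lt2; case: ifP; lia.
- rewrite /enc ifF ?ifF; try lia; move=> eq_enc.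
  have [] : s1 - 10 = s2 - 10 /\ p1 = p2 by apply: (divmod_inj lt_p1 lt_p2); lia.
  by split; first lia.
Qed.

Definition slot (k : diag_kind) (e : bool) : nat :=
  match k with
  | Dg0 => if e then 3 else 2
  | Dg1 => if e then 4 else 0
  | Dg2 => if e then 6 else 7
  | DgH => if e then 9 else 8
  | DgLast => if e then 5 else 1
  | Lo0 b => 10 + 8 * b + (if e then 4 else 3)
  | Lo1 b => 10 + 8 * b + (if e then 6 else 1)
  | Up0 b => 10 + 8 * b + (if e then 7 else 0)
  | Up1 b => 10 + 8 * b + (if e then 5 else 2)
  end.

Definition unslot (s : nat) : diag_kind * bool :=
  if s < 10 then
    match s with
    | 0 => (Dg1, false) | 1 => (DgLast, false) | 2 => (Dg0, false) | 3 => (Dg0, true)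
    | 4 => (Dg1, true) | 5 => (DgLast, true) | 6 => (Dg2, true) | 7 => (Dg2, false)
    | 8 => (DgH, false) | _ => (DgH, true)
    end
  else
    let b := (s - 10) %/ 8 in
    match (s - 10) %% 8 with
    | 0 => (Up0 b, false) | 1 => (Lo1 b, false) | 2 => (Up1 b, false) | 3 => (Lo0 b, false)
    | 4 => (Lo0 b, true) | 5 => (Up1 b, true) | 6 => (Lo1 b, true) | _ => (Up0 b, true)
    end.

Lemma slotK (k : diag_kind) (e : bool) : unslot (slot k e) = (k, e).
Proof.
case: k => [|||||b|b|b|b]; case: e => //; rewrite /unslot /=;
  rewrite (_ : forall l, 10 + 8 * b + l - 10 = b * 8 + l) => [|l]; try lia;
  by rewrite modnMDl divnMDl // divn_small ?addn0.
Qed.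

Lemma slot_inj (k1 k2 : diag_kind) (e1 e2 : bool) : slot k1 e1 = slot k2 e2 -> k1 = k2 /\ e1 = e2.
Proof. by move=> eq_slot; have := slotK k1 e1; rewrite eq_slot slotK => -[]. Qed.

Lemma slot_lt (k : diag_kind) (e : bool) : valid_kind k -> slot k e < 8 * t + 2.
Proof. by case: k => [|||||b|b|b|b] /=; case: e; lia. Qed.

Definition pos (k : diag_kind) (e : bool) (x : nat) : nat :=
  match k with
  | Dg0 | Dg2 | DgH => h - 1 - x
  | Dg1 | DgLast => if e then h - 1 - cshift (h - 1) x else cshift (h - 1) x
  | Lo0 b => if e then cshift (3 + 2 * b + h - 1) x else h - 1 - cshift (3 + 2 * b) x
  | Lo1 b => if e then cshift (4 + 2 * b) x else h - 1 - cshift (3 + 2 * b) x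
  | Up0 b => if e then h - 1 - cshift (3 + 2 * b + h - 1) x else cshift (3 + 2 * b) x
  | Up1 b => if e then h - 1 - cshift (4 + 2 * b) x else cshift (3 + 2 * b) x
  end.

Lemma cshift_inj (c x1 x2 : nat) : x1 < h -> x2 < h -> cshift c x1 = cshift c x2 -> x1 = x2.
Proof. by move=> lt1 lt2 /eqP; rewrite eqn_modDr !modn_small // => /eqP. Qed.

Lemma pos_lt (k : diag_kind) (e : bool) (x : nat) : x < h -> pos k e x < h.
Proof.
by move=> lt_x; case: k => [|||||b|b|b|b] /=; case: e; rewrite ?cshift_lt //; lia.
Qed.

Lemma pos_inj (k : diag_kind) (e : bool) (x1 x2 : nat) : x1 < h -> x2 < h ->
  pos k e x1 = pos k e x2 -> x1 = x2.
Proof.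
move=> lt1 lt2; have cshift_rev c : h - 1 - cshift c x1 = h - 1 - cshift c x2 -> x1 = x2.
  move=> eq_rev; apply: (@cshift_inj c) => //.
  by move: eq_rev (cshift_lt c x1) (cshift_lt c x2); lia.
by case: k => [|||||b|b|b|b] /=; case: e => /= eq_pos;
  first [exact: cshift_inj eq_pos | exact: cshift_rev eq_pos | lia].
Qed.

Lemma enc_block (b l p : nat) : l < 8 -> enc (10 + 8 * b + l) p = blk b + l * h + 1 + p.
Proof. by move=> lt_l; rewrite /enc (_ : 10 + 8 * b + l < 10 = false) /= /blk; [nia | lia]. Qed.

Lemma abs_ent (k : diag_kind) (e : bool) (x : nat) : x < h ->
  `|ent k e x|%N = enc (slot k e) (pos k e x).
Proof.
move=> lt_x; have lt_r := cshift_lt (h - 1) x.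
case: k => [|||||b|b|b|b]; case: e; rewrite /= /shalf /signz ?abszN /=.
1-10: by rewrite /enc /base_W /=; congr (absz (halfm _ _)); lia.
all: have := cshift_lt (3 + 2 * b) x; have := cshift_lt (3 + 2 * b + h - 1) x.
all: by have := cshift_lt (4 + 2 * b) x; rewrite enc_block //; lia.
Qed.

Definition arr : parray n := fun i j =>
  let d := diag n_gt0 i j in if in_supp d then Some (ent (kind_of d) (odd i) (i %% h)) else None.

Lemma filled_arr (i j : 'I_n) : filled (arr i j) = in_supp (diag n_gt0 i j).
Proof. by rewrite /arr /filled; case: in_supp. Qed.

Lemma cell_val_arr (i j : 'I_n) : cell_val (arr i j) =
  if in_supp (diag n_gt0 i j) then ent (kind_of (diag n_gt0 i j)) (odd i) (i %% h) else 0%R.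
Proof. by rewrite /arr /cell_val; case: in_supp. Qed.

Lemma card_supp : #|[set d : 'I_n | in_supp d]| = 4 * t + 1.
Proof.
apply/eqP; rewrite -eqz_nat; apply/eqP.
rewrite -natz -sum1_card natr_sum big_mkcond /=.
rewrite (eq_bigr (fun d : 'I_n => if in_supp d then 1%R else 0%R)) => [|d _].
  by rewrite (sum_supp (fun _ => 1%R)) sumr_const card_ord -mulr_natr natz; lia.
by rewrite inE; case: in_supp.
Qed.

Lemma card_arr_row (i : 'I_n) : #|[set j : 'I_n | filled (arr i j)]| = 4 * t + 1.
Proof.
rewrite -card_supp -[RHS](card_preimset _ (@diag_injr _ n_gt0 i)).
by apply: eq_card => j; rewrite !inE filled_arr.
Qed.

Lemma card_arr_col (j : 'I_n) : #|[set i : 'I_n | filled (arr i j)]| = 4 * t + 1.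
Proof.
rewrite -card_supp -[RHS](card_preimset _ (@diag_injl _ n_gt0 j)).
by apply: eq_card => i; rewrite !inE filled_arr.
Qed.

Lemma arr_row_sum (i : 'I_n) : ((\sum_(j : 'I_n) cell_val (arr i j)) %% Posz m)%Z = 0%R.
Proof.
apply/dvdz_mod0P; have := row_sum (odd i) (ltn_pmod i h_gt0).
rewrite (reindex_inj (@diag_injr _ n_gt0 i)) /=.
by under [X in _ -> (_ %| X)%Z]eq_bigr => j _ do rewrite cell_val_arr.
Qed.

Lemma arr_col_sum (j : 'I_n) : ((\sum_(i : 'I_n) cell_val (arr i j)) %% Posz m)%Z = 0%R.
Proof.
apply/dvdz_mod0P; have := col_sum (ltn_ord j).
rewrite (reindex_inj (@diag_injl _ n_gt0 j)) /=.
have row_of i : (j + n - diag n_gt0 i j) %% n = i := congr1 val (@diagK _ n_gt0 j i).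
under eq_bigr => i _ do rewrite row_of.
by under [X in _ -> (_ %| X)%Z]eq_bigr => i _ do rewrite cell_val_arr.
Qed.

Definition mag (ij : 'I_n * 'I_n) : nat := `|cell_val (arr ij.1 ij.2)|%N.

Definition filled_cells : {set 'I_n * 'I_n} := [set ij | filled (arr ij.1 ij.2)].

Lemma mag_enc (i j : 'I_n) : filled (arr i j) ->
  let k := kind_of (diag n_gt0 i j) in
  [/\ slot k (odd i) < 8 * t + 2, pos k (odd i) (i %% h) < h
    & mag (i, j) = enc (slot k (odd i)) (pos k (odd i) (i %% h))].
Proof.
rewrite filled_arr => supp_d; have [valid_k _] := kind_ofK supp_d.
have lt_x := ltn_pmod i h_gt0.
rewrite /mag cell_val_arr /= supp_d abs_ent //; split => //; [exact: slot_lt | exact: pos_lt].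
Qed.

Lemma mag_range (ij : 'I_n * 'I_n) : ij \in filled_cells -> 0 < mag ij <= N.
Proof.
case: ij => i j; rewrite inE /= => /mag_enc[lt_s lt_p ->].
exact: enc_range.
Qed.

Lemma mag_inj : {in filled_cells &, injective mag}.
Proof.
move=> [i1 j1] [i2 j2]; rewrite !inE /= => filled1 filled2.
have [lt_s1 lt_p1 ->] := mag_enc filled1; have [lt_s2 lt_p2 ->] := mag_enc filled2.
move=> /(enc_inj lt_s1 lt_s2 lt_p1 lt_p2)[/slot_inj[eq_k eq_e]].
rewrite filled_arr in filled1; rewrite filled_arr in filled2; rewrite eq_k eq_e.
move=> /(pos_inj (ltn_pmod i1 h_gt0) (ltn_pmod i2 h_gt0)) eq_x.
have eq_i : i1 = i2 by apply/val_inj/(odd_modn_inj h_odd); rewrite ?ltn_ord.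
move: eq_k => /(congr1 num_of); rewrite (kind_ofK filled1).2 (kind_ofK filled2).2 eq_i.
by move=> /val_inj /(@diag_injr _ n_gt0) ->.
Qed.

Lemma card_filled_cells : #|filled_cells| = N.
Proof.
rewrite -sum1_card (eq_bigl (fun ij => filled (arr ij.1 ij.2))) => [|ij]; last by rewrite inE.
rewrite -(pair_big_dep xpredT (fun i j => filled (arr i j)) (fun _ _ => 1)) /=.
rewrite (eq_bigr (fun _ => 4 * t + 1)) => [|i _]; last first.
  by rewrite -(card_arr_row i) -sum1_card; apply: eq_bigl => j; rewrite inE.
by rewrite sum_nat_const card_ord.
Qed.

Lemma card_arr_pm (x : nat) : 1 <= x <= N ->
  #|[set ij : 'I_n * 'I_n |
      (arr ij.1 ij.2 == Some (Posz x)) || (arr ij.1 ij.2 == Some (- Posz x)%R)]| = 1.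
Proof.
move=> x_range; rewrite -[RHS](card_fiber_inj (x := x) mag_inj) ?card_filled_cells //; last first.
  by move=> ij /mag_range.
apply: eq_card => -[i j]; rewrite !inE /mag /filled /=.
case: (arr i j) => [a|] //=; rewrite !(inj_eq (@Some_inj _)).
by rewrite -eqz_nat abszE eqr_norml andbT.
Qed.

Lemma arr_neq0 (i j : 'I_n) (a : int) : arr i j = Some a -> a != 0%R.
Proof.
move=> arr_ij; have : (i, j) \in filled_cells by rewrite inE /filled /= arr_ij.
by move/mag_range; rewrite /mag /= arr_ij; apply: contraTneq => ->.
Qed.

Lemma arr_heffter : is_heffter (4 * t + 1) arr.
Proof.
split; first exact: arr_neq0.
split; first exact: card_arr_row.
split; first exact: card_arr_col.
split; first exact: arr_row_sum.
split; first exact: arr_col_sum.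
exact: card_arr_pm.
Qed.

End Construction.

Theorem theorem7p2 (n k : nat) :
  n %% 4 = 2 -> 6 <= n -> k %% 4 = 1 -> 5 <= k -> k < n ->
  exists A : parray n, is_heffter k A.
Proof.
move=> n_mod4 n_ge6 k_mod4 k_ge5 lt_kn.
have [h def_n] : exists h, n = 2 * h by exists n./2; lia.
have [t def_k] : exists t, k = 4 * t + 1 by exists (k %/ 4); lia.
subst n k; have h_odd : odd h by lia.
have t_gt0 : 0 < t by lia.
have t_small : 2 * t + 1 <= h by lia.
exists (arr h_odd t_gt0 t_small); exact: arr_heffter.
Qed.
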